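(* Let $n$, $q\ge2$ and $a\in[1:n]$ be integers, and $\nu=\lceil (n+1)/a\rceil$. For any $\mathbf{l}=(l_1,\dots,l_{q-1})\in[1:\nu]^{q-1}$, the cell $$C_{\mathbf{l}}=\{\mathbf{t}\in\mathcal{N}_{q,n}:(l_i-1)a\le t_i\le l_ia-1\ \ \forall i\in[1:q-1]\}$$ is non-empty if and only if $q-1\le\sum_{i=1}^{q-1}l_i\le\frac na+(q-1)$.
   Context: $\mathcal{N}_{q,n}=\{\mathbf{t}\in\mathbb{Z}_{\ge0}^q:\sum_{i=1}^qt_i=n\}$. *)

From mathcomp Require Import all_boot all_order all_algebra.
Set Implicit Arguments. Unset Strict Implicit. Unset Printing Implicit Defensive.

Definition ceil_div (m d : nat) : nat := (m + d - 1) %/ d.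

Definition nu (n a : nat) : nat := ceil_div n.+1 a.

(* t in N_{q,n}: t = (t_1,...,t_q) (coordinates 1..q of t : nat -> nat),
   nonnegative integers summing to n *)
Definition in_Nqn (q n : nat) (t : nat -> nat) : Prop :=
  \sum_(1 <= i < q.+1) t i = n.

Definition in_cell (q n a : nat) (l t : nat -> nat) : Prop :=
  in_Nqn q n t /\
  forall i, 1 <= i <= q - 1 -> (l i - 1) * a <= t i <= l i * a - 1.

(* Only the lower ends [(l_i - 1) a] of the intervals matter: the free last
   coordinate [t_q = n - sum_{i<q} t_i] absorbs the rest, so the cell is
   non-empty exactly when [sum_{i<q} (l_i - 1) a <= n], i.e. when
   [sum_i l_i <= n/a + (q - 1)]; the lower bound [q - 1 <= sum_i l_i] is just
   [l_i >= 1]. *)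
From Stdlib Require Import Setoid.
From mathcomp Require Import all_boot all_order all_algebra.
Import GRing.Theory Num.Theory.

Lemma sum_nat_subn1 {m k : nat} {l : nat -> nat} :
  (forall i, m <= i < k -> 0 < l i) ->
  \sum_(m <= i < k) (l i - 1) + (k - m) = \sum_(m <= i < k) l i.
Proof.
move=> l_gt0; rewrite -[k - m]muln1 -sum_nat_const_nat -big_split /=.
by rewrite !big_nat; apply: eq_bigr => i /l_gt0; exact: subnK.
Qed.

Lemma ler_add_divn {R : numFieldType} (d c n a : nat) : 0 < a ->
  ((d + c)%:R <= n%:R / a%:R + c%:R :> R)%R = (d * a <= n).
Proof. by move=> a_gt0; rewrite natrD lerD2r ler_pdivlMr ?ltr0n // -natrM ler_nat. Qed.

Section Cell.

Variables (q n a : nat) (l : nat -> nat).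
Hypothesis q_gt0 : 0 < q.

Let cell_index (i : nat) : (1 <= i <= q - 1) = (0 < i < q).
Proof. by rewrite leq_subRL // add1n. Qed.

Lemma in_cell_lower_sum (t : nat -> nat) :
  in_cell q n a l t -> \sum_(1 <= i < q) (l i - 1) * a <= n.
Proof.
case=> <- t_in; rewrite big_nat_recr //; apply: leq_trans (leq_addr _ _).
rewrite !big_nat; apply: leq_sum => i i_q.
by rewrite -cell_index in i_q; case/andP: (t_in i i_q).
Qed.

Hypotheses (a_gt0 : 0 < a) (l_gt0 : forall i, 0 < i < q -> 0 < l i).

Definition cell_witness (i : nat) : nat :=
  if i < q then (l i - 1) * a else n - \sum_(1 <= j < q) (l j - 1) * a.

Lemma cell_witness_in_cell :
  \sum_(1 <= i < q) (l i - 1) * a <= n -> in_cell q n a l cell_witness.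
Proof.
move=> low_n; split.
- rewrite /in_Nqn big_nat_recr //= /cell_witness ltnn.
  by rewrite (@eq_big_nat _ _ _ 1 q _ (fun i => (l i - 1) * a)) ?subnKC // => i /andP[_ ->].
- move=> i; rewrite cell_index => i_range; have li_gt0 := l_gt0 i i_range.
  case/andP: i_range => _ i_lt_q.
  by rewrite /cell_witness i_lt_q leqnn mulnBl mul1n leq_sub2l.
Qed.

Lemma cell_nonempty_iff :
  (exists t, in_cell q n a l t) <-> \sum_(1 <= i < q) (l i - 1) * a <= n.
Proof.
split=> [[t]|low_n]; first exact: in_cell_lower_sum.
by exists cell_witness; apply: cell_witness_in_cell.
Qed.

End Cell.

Theorem lemma12 (n q a : nat) (l : nat -> nat) :
  (2 <= n)%N -> (2 <= q)%N -> (1 <= a <= n)%N ->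
  (forall i, (1 <= i <= q - 1)%N -> (1 <= l i <= nu n a)%N) ->
  ((exists t : nat -> nat, in_cell q n a l t) <->
   ((q - 1 <= \sum_(1 <= i < q) l i)%N /\
    ((\sum_(1 <= i < q) l i)%:R <= (n%:R / a%:R + (q - 1)%:R : rat))%R)).
Proof.
move=> _ q_ge2 /andP[a_gt0 _] l_range.
have q_gt0 : 0 < q by apply: leq_trans q_ge2.
have l_gt0 i : 0 < i < q -> 0 < l i.
  move=> i_q; have i_range : 0 < i <= q - 1 by rewrite leq_subRL // add1n.
  by case/andP: (l_range i i_range).
rewrite cell_nonempty_iff // -(sum_nat_subn1 l_gt0) ler_add_divn // big_distrl /=.
by rewrite leq_addl; split=> [|[]].
Qed.
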